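(* Let $n\ge 2$ and let $S$ be an admissible peak set in $S^B_n$. Then \[ \min\{d_H(\sigma,\rho) : \sigma,\rho\in P^B(S;n),\ \sigma\neq\rho\} =\min\{d_\ell(\sigma,\rho) : \sigma,\rho\in P^B(S;n),\ \sigma\neq\rho\} =\min\{d_W(\sigma,\rho) : \sigma,\rho\in P^B(S;n),\ \sigma\neq\rho\}=1. \]
   Context: $S^B_n$ is the set of bijections $\sigma$ of $\{-n,\dots,-1,1,\dots,n\}$ with $\sigma(-i)=-\sigma(i)$ for all $i$, with multiplication given by composition; a signed permutation is written in one-line notation $\sigma(1)\cdots\sigma(n)$. A signed permutation $\sigma$ has a peak at index $i\in\{2,\dots,n-1\}$ if $\sigma(i-1)<\sigma(i)>\sigma(i+1)$ (usual order on integers). $Peak(\sigma)$ is the set of indices where $\sigma$ has a peak, and for $S\subseteq[n]$, $P^B(S;n)=\{\sigma\in S^B_n : Peak(\sigma)=S\}$. $S$ is an admissible peak set if $P^B(S;n)\neq\emptyset$ (equivalently, $S\subseteq\{2,\dots,n-1\}$ and $S$ contains no two consecutive integers). For $\sigma,\rho\in S^B_n$: $d_H(\sigma,\rho)=|\{i\in[n] : \sigma(i)\neq\rho(i)\}|$; $d_\ell(\sigma,\rho)=\max\{|\sigma(i)-\rho(i)| : i\in[n]\}$; $d_W(\sigma,\rho)=\ell_B(\rho^{-1}\sigma)$, where $\ell_B(\gamma)$ is the minimum number of factors in an expression of $\gamma$ as a product of the Coxeter generators $s_0^B,\dots,s_{n-1}^B$; here $s_0^B$ swaps $1$ and $-1$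 and fixes all other values, and for $1\le i<n$, $s_i^B$ swaps $i$ with $i+1$ and $-i$ with $-(i+1)$, fixing everything else. *)

(* Signed permutations of size n are represented as functions
   int -> int that restrict to a bijection of D_n = {-n..-1,1..n} commuting
   with negation; values outside D_n are irrelevant (equality = agreement on D_n). *)
From mathcomp Require Import all_boot all_order all_algebra.
Set Implicit Arguments. Unset Strict Implicit. Unset Printing Implicit Defensive.
Import Order.TTheory GRing.Theory Num.Theory.
Local Open Scope ring_scope.

Definition sdom (n : nat) (x : int) : bool := (x != 0) && (absz x <= n)%N.

Definition is_signed_perm (n : nat) (s : int -> int) : Prop :=
  [/\ forall x, sdom n x -> sdom n (s x),
      forall x y, sdom n x -> sdom n y -> s x = s y -> x = y,
      forall y, sdom n y -> exists2 x, sdom n x & s x = y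
    & forall x, sdom n x -> s (- x) = - s x].

Definition sp_eq (n : nat) (s r : int -> int) : Prop :=
  forall x, sdom n x -> s x = r x.

Definition is_peak (n : nat) (s : int -> int) (i : nat) : bool :=
  [&& (1 < i < n)%N, s (Posz i.-1) < s (Posz i) & s (Posz i.+1) < s (Posz i)].

Definition PB (n : nat) (S : pred nat) (s : int -> int) : Prop :=
  is_signed_perm n s /\ forall i : nat, S i = is_peak n s i.

Definition dH (n : nat) (s r : int -> int) : nat :=
  count (fun i : nat => s (Posz i) != r (Posz i)) (iota 1 n).

Definition dL (n : nat) (s r : int -> int) : nat :=
  (\max_(i <- iota 1 n) absz (s (Posz i) - r (Posz i)))%N.

Definition domlist (n : nat) : seq int :=
  [seq Posz i | i <- iota 1 n] ++ [seq - Posz i | i <- iota 1 n].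
Definition sinv (n : nat) (r : int -> int) (y : int) : int :=
  head y [seq x <- domlist n | r x == y].

Definition gen (i : nat) : int -> int :=
  if i == 0%N then
    fun x => if x == 1 then -1 else if x == -1 then 1 else x
  else
    fun x => if x == Posz i then Posz i + 1
             else if x == Posz i + 1 then Posz i
             else if x == - Posz i then - (Posz i + 1)
             else if x == - (Posz i + 1) then - Posz i
             else x.

Definition word_fun (n : nat) (w : seq 'I_n) : int -> int :=
  foldr (fun (i : 'I_n) f => fun x => gen (nat_of_ord i) (f x)) id w.

Definition coxeter_length (n : nat) (g : int -> int) (k : nat) : Prop :=
  (exists w : seq 'I_n, size w = k /\ sp_eq n g (word_fun w))
  /\ forall w : seq 'I_n, sp_eq n g (word_fun w) -> (k <= size w)%N.

Definition dW_is (n : nat) (s r : int -> int) (k : nat) : Prop :=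
  coxeter_length n (fun x => sinv n r (s x)) k.

Definition is_min (P : nat -> Prop) (m : nat) : Prop :=
  P m /\ forall k, P k -> (m <= k)%N.

From mathcomp Require Import all_boot all_order all_algebra.
From mathcomp Require Import zify.
Set Implicit Arguments. Unset Strict Implicit. Unset Printing Implicit Defensive.
Import Order.TTheory GRing.Theory Num.Theory.
Local Open Scope ring_scope.

(* An admissible peak set S is realised by a signed permutation fixing every
   value up to sign, i |-> e(i) i: then i is a peak iff e(i) = 1 and
   e(i+1) = -1, so taking e = + exactly on S works, with the sign at position 1
   (never a peak) free.  Flipping that sign gives two elements of P^B(S;n) at
   Hamming distance 1 whose quotient is s_0, hence also at Coxeter distance 1.
   Choosing the sign at 1 opposite to the sign at 2 and swapping the values
   +-1 and +-2 preserves every relative order, hence every peak, and moves each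
   value by at most 1.  Distance 0 forces equality for all three metrics. *)

Definition admissible (n : nat) (S : pred nat) : Prop :=
  (forall i, S i -> (1 < i < n)%N) /\ (forall i, S i -> ~~ S i.+1).

Lemma peak_not_consecutive n s i : is_peak n s i -> ~~ is_peak n s i.+1.
Proof. by case/and3P=> _ _ lt_next; apply/negP=> /and3P[_ /= + _]; lia. Qed.

Lemma peak_set_admissible n S s :
  (forall i, S i = is_peak n s i) -> admissible n S.
Proof.
move=> peakS; split=> i; rewrite !peakS; first by case/andP.
exact: peak_not_consecutive.
Qed.

Lemma eq_is_peak n s r :
  (forall i j : nat, (0 < i <= n)%N -> (0 < j <= n)%N ->
     (r (Posz i) < r (Posz j)) = (s (Posz i) < s (Posz j))) ->
  forall i, is_peak n r i = is_peak n s i.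
Proof.
move=> same_order i; rewrite /is_peak; case: (ltnP 1 i) => //= i_gt1.
by case: (ltnP i n) => //= i_lt_n; rewrite !same_order //; lia.
Qed.

Section SignedPerm.
Variable n : nat.

Lemma sdom1 : (0 < n)%N -> sdom n 1.
Proof. by rewrite /sdom; lia. Qed.

Lemma signed_perm_comp s g : is_signed_perm n s ->
  (forall x, sdom n x -> sdom n (g x)) -> involutive g ->
  (forall x, g (- x) = - g x) -> is_signed_perm n (g \o s).
Proof.
move=> [s_dom s_inj s_surj s_odd] g_dom gK g_odd; split=> /=.
- by move=> x /s_dom/g_dom.
- by move=> x y dx dy /(can_inj gK); apply: s_inj.
- move=> y /g_dom/s_surj[x dx sx]; exists x => //.
  by rewrite sx gK.
- by move=> x dx; rewrite s_odd.
Qed.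

Lemma mem_domlist x : (x \in domlist n) = sdom n x.
Proof.
rewrite /domlist mem_cat /sdom; apply/idP/idP.
  by case/orP=> /mapP[i]; rewrite mem_iota => i_range ->; lia.
case/andP=> x_neq0 x_le; apply/orP.
have [x_ge0|x_lt0] := leP 0 x; [left|right]; apply/mapP; exists (absz x);
  rewrite ?mem_iota; lia.
Qed.

Lemma sinvK r x : is_signed_perm n r -> sdom n x -> sinv n r (r x) = x.
Proof.
case=> _ r_inj _ _ dx; rewrite /sinv.
have : x \in [seq z <- domlist n | r z == r x] by rewrite mem_filter eqxx mem_domlist.
case E: [seq z <- domlist n | r z == r x] => [|z l] //= _.
have : z \in [seq z <- domlist n | r z == r x] by rewrite E mem_head.
by rewrite mem_filter mem_domlist => /andP[/eqP rz dz]; apply: r_inj.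
Qed.

Lemma sinvE r y : is_signed_perm n r -> sdom n y -> r (sinv n r y) = y.
Proof.
move=> sr dy; have [_ _ r_surj _] := sr.
by have [x dx <-] := r_surj _ dy; rewrite sinvK.
Qed.

Lemma sp_eq_pos s r : is_signed_perm n s -> is_signed_perm n r ->
  (forall i : nat, (0 < i <= n)%N -> s (Posz i) = r (Posz i)) -> sp_eq n s r.
Proof.
move=> [_ _ _ s_odd] [_ _ _ r_odd] eq_pos x dx; move: (dx) => /andP[x_neq0 x_le].
have dabs : sdom n (Posz (absz x)) by apply/andP; split; lia.
have [x_ge0|x_lt0] := leP 0 x.
  have -> : x = Posz (absz x) by lia.
  by apply: eq_pos; lia.
have -> : x = - Posz (absz x) by lia.
by rewrite s_odd // r_odd // eq_pos //; lia.
Qed.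

End SignedPerm.

Section Distances.
Variables (n : nat) (s r : int -> int).

Lemma dH_eq0 : dH n s r = 0%N ->
  forall i : nat, (0 < i <= n)%N -> s (Posz i) = r (Posz i).
Proof.
move=> /eqP; rewrite -leqn0 leqNgt -has_count => /hasPn no_diff i i_range.
by apply/eqP; rewrite -[_ == _]negbK no_diff // mem_iota; lia.
Qed.

Lemma dH_le1 : (forall i : nat, (1 < i)%N -> s (Posz i) = r (Posz i)) ->
  (dH n s r <= 1)%N.
Proof.
move=> eq_tail; rewrite /dH; case: n => [|m] //=.
rewrite (@eq_in_count _ _ pred0) ?count_pred0 ?addn0 ?leq_b1 //.
by move=> i; rewrite mem_iota => i_ge2 /=; rewrite eq_tail ?eqxx //; lia.
Qed.

Lemma dL_eq0 : dL n s r = 0%N ->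
  forall i : nat, (0 < i <= n)%N -> s (Posz i) = r (Posz i).
Proof.
move=> dL0 i i_range; apply/eqP; rewrite -subr_eq0 -absz_eq0 -leqn0 -dL0.
by apply: (leq_bigmax_seq i) => //; rewrite mem_iota; lia.
Qed.

Lemma dL_le1 : (forall i : nat, (absz (s (Posz i) - r (Posz i)) <= 1)%N) ->
  (dL n s r <= 1)%N.
Proof. by move=> close; apply/bigmax_leqP_seq => i _ _. Qed.

End Distances.

Lemma coxeter_length0 n g : coxeter_length n g 0%N -> sp_eq n g id.
Proof. by case=> [[w [/size0nil -> g_eq]] _]. Qed.

Lemma coxeter_length_gen n g (i : 'I_n) : sp_eq n g (gen i) -> ~ sp_eq n g id ->
  coxeter_length n g 1%N.
Proof.
move=> g_gen g_neq_id; split; first by exists [:: i].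
by case=> [|j w] // g_id; case: g_neq_id.
Qed.

Lemma dW_is0 n s r : is_signed_perm n s -> is_signed_perm n r ->
  dW_is n s r 0%N -> sp_eq n s r.
Proof.
move=> [s_dom _ _ _] sr /coxeter_length0 sinv_id x dx.
by rewrite -(sinvE sr (s_dom _ dx)) sinv_id.
Qed.

Lemma min_distance_one n S (D : (int -> int) -> (int -> int) -> nat -> Prop) s r k :
  (forall s r, is_signed_perm n s -> is_signed_perm n r -> D s r 0%N -> sp_eq n s r) ->
  PB n S s -> PB n S r -> ~ sp_eq n s r -> D s r k -> (k <= 1)%N ->
  is_min (fun d => exists s r, [/\ PB n S s, PB n S r, ~ sp_eq n s r & D s r d]) 1%N.
Proof.
move=> D0_eq PBs PBr s_neq_r Dk k_le1.
have D_pos s' r' d : PB n S s' -> PB n S r' -> ~ sp_eq n s' r' -> D s' r' d ->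
    (0 < d)%N.
  by move=> [ss _] [sr _] neq; case: d => // /(D0_eq _ _ ss sr)/neq.
split=> [|d [s' [r' [PBs' PBr' neq /(D_pos _ _ _ PBs' PBr' neq)]]]] //.
have -> : 1%N = k by apply/eqP; rewrite eqn_leq k_le1 (D_pos _ _ _ PBs PBr s_neq_r Dk).
by exists s, r.
Qed.

Lemma gen0E x : gen 0 x = if x == 1 then -1 else if x == -1 then 1 else x.
Proof. by []. Qed.

Lemma gen1E x : gen 1 x =
  if x == 1 then 2 else if x == 2 then 1
  else if x == -1 then -2 else if x == -2 then -1 else x.
Proof. by []. Qed.

Lemma sdom_gen0 n x : sdom n x -> sdom n (gen 0 x).
Proof. by rewrite /sdom gen0E; repeat case: ifP => [/eqP ?|_]; lia. Qed.

Lemma gen1K : involutive (gen 1).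
Proof.
move=> x; rewrite [gen 1 x]gen1E; repeat case: eqP => [->|?] //.
by rewrite gen1E; repeat case: eqP.
Qed.

Lemma gen1N x : gen 1 (- x) = - gen 1 x.
Proof. by rewrite !gen1E; repeat case: eqP => ?; lia. Qed.

Lemma sdom_gen1 n x : (2 <= n)%N -> sdom n x -> sdom n (gen 1 x).
Proof. by rewrite /sdom gen1E => n_ge2; repeat case: ifP => [/eqP ?|_]; lia. Qed.

Lemma dL_gen1_comp n s : (dL n s (gen 1 \o s) <= 1)%N.
Proof. by apply: dL_le1 => i /=; rewrite gen1E; repeat case: eqP => ?; lia. Qed.

(* The hypothesis excludes exactly the pairs {1, 2} and {-1, -2}, whose order s_1 reverses. *)
Lemma gen1_lt x y : ~~ ((0 < x * y) && (absz x + absz y == 3)%N) ->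
  (gen 1 x < gen 1 y) = (x < y).
Proof. by rewrite !gen1E; repeat case: eqP => ?; nia. Qed.

Definition sign_sperm (e : nat -> int) (x : int) : int := e (absz x) * x.

Lemma sign_sperm_gen0 e e' : e' 1%N = - e 1%N -> (forall k, k != 1%N -> e' k = e k) ->
  forall x, sign_sperm e x = sign_sperm e' (gen 0 x).
Proof.
move=> e'1 e'_eq x; rewrite gen0E /sign_sperm.
case: eqP => [->|x_neq1]; first by rewrite /= e'1; lia.
case: eqP => [->|x_neqN1]; first by rewrite /= e'1; lia.
by rewrite e'_eq //; lia.
Qed.

Section SignSperm.
Variable e : nat -> int.
Hypothesis e_sign : forall k, e k = 1 \/ e k = -1.

Lemma abs_sign_sperm x : absz (sign_sperm e x) = absz x.
Proof. by rewrite /sign_sperm; case: (e_sign (absz x)) => ->; lia. Qed.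

Lemma sign_sperm_signed n : is_signed_perm n (sign_sperm e).
Proof.
have sdomE x : sdom n (sign_sperm e x) = sdom n x.
  by rewrite /sdom -!absz_eq0 abs_sign_sperm.
have sign_spermK : involutive (sign_sperm e).
  move=> x; rewrite {1}/sign_sperm abs_sign_sperm /sign_sperm.
  by case: (e_sign (absz x)) => ->; lia.
split=> [x|x y _ _|y dy|x _].
- by rewrite sdomE.
- by apply: inv_inj.
- by exists (sign_sperm e y); rewrite ?sdomE ?sign_spermK.
- by rewrite /sign_sperm abszN; lia.
Qed.

Lemma is_peak_sign_sperm n i : (1 < i < n)%N ->
  is_peak n (sign_sperm e) i = (e i == 1) && (e i.+1 == -1).
Proof.
move=> i_range; rewrite /is_peak i_range /sign_sperm /=.
case: (e_sign i.-1) (e_sign i) (e_sign i.+1) => -> [] -> [] ->;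
  apply/idP/idP; lia.
Qed.

Lemma is_peak_gen1_sign_sperm n : e 2%N = - e 1%N ->
  forall i, is_peak n (gen 1 \o sign_sperm e) i = is_peak n (sign_sperm e) i.
Proof.
move=> e21; apply: eq_is_peak => a b a_range b_range /=.
apply: gen1_lt; rewrite !abs_sign_sperm //=; apply/negP=> /andP[+ sum3].
have [[-> ->]|[-> ->]] : (a = 1 /\ b = 2 \/ a = 2 /\ b = 1)%N by lia.
all: by rewrite /sign_sperm e21; case: (e_sign 1%N) => ->.
Qed.

Lemma PB_gen1_sign_sperm n S : (2 <= n)%N -> e 2%N = - e 1%N ->
  PB n S (sign_sperm e) -> PB n S (gen 1 \o sign_sperm e).
Proof.
move=> n_ge2 e21 [_ peak_e]; split; last by move=> i; rewrite is_peak_gen1_sign_sperm.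
apply: signed_perm_comp; first exact: sign_sperm_signed.
- by move=> x; apply: sdom_gen1.
- exact: gen1K.
- exact: gen1N.
Qed.

Lemma sign_sperm_gen1_neq n : (0 < n)%N ->
  ~ sp_eq n (sign_sperm e) (gen 1 \o sign_sperm e).
Proof.
move=> /sdom1 d1 /(_ 1 d1); rewrite /= /sign_sperm /= mulr1 gen1E.
by case: (e_sign 1%N) => ->.
Qed.

End SignSperm.

Section FlipFirstSign.
Variables (n : nat) (e e' : nat -> int).
Hypotheses (n_gt0 : (0 < n)%N) (e_sign : forall k, e k = 1 \/ e k = -1).
Hypotheses (e'1 : e' 1%N = - e 1%N) (e'_eq : forall k, k != 1%N -> e' k = e k).

Let e'_sign k : e' k = 1 \/ e' k = -1.
Proof.
have [->|/e'_eq ->] := eqVneq k 1%N; last exact: e_sign.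
by rewrite e'1; case: (e_sign 1%N) => ->; auto.
Qed.

Lemma sign_sperm_flip1_neq : ~ sp_eq n (sign_sperm e) (sign_sperm e').
Proof.
by move=> /(_ 1 (sdom1 n_gt0)); rewrite /sign_sperm /= e'1; case: (e_sign 1%N) => ->.
Qed.

Lemma dH_sign_sperm_flip1 : (dH n (sign_sperm e) (sign_sperm e') <= 1)%N.
Proof. by apply: dH_le1 => i i_gt1; rewrite /sign_sperm /= e'_eq //; lia. Qed.

Lemma dW_sign_sperm_flip1 : dW_is n (sign_sperm e) (sign_sperm e') 1%N.
Proof.
have sinv_gen0 : sp_eq n (fun x => sinv n (sign_sperm e') (sign_sperm e x)) (gen 0).
  move=> x dx; rewrite (sign_sperm_gen0 e'1 e'_eq) sinvK //.
    exact: sign_sperm_signed.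
  exact: sdom_gen0.
apply: (coxeter_length_gen (i := Ordinal n_gt0)) => // /(_ 1 (sdom1 n_gt0)).
by rewrite sinv_gen0.
Qed.

End FlipFirstSign.

Definition peak_signs (S : pred nat) (c : int) (k : nat) : int :=
  if k == 1%N then c else if S k then 1 else -1.

Lemma peak_signs_sign S c : c = 1 \/ c = -1 ->
  forall k, peak_signs S c k = 1 \/ peak_signs S c k = -1.
Proof. by move=> c_sign k; rewrite /peak_signs; case: (k == 1%N) => //; case: (S k); auto. Qed.

Lemma peak_signs_neq1 S c c' k : k != 1%N -> peak_signs S c k = peak_signs S c' k.
Proof. by rewrite /peak_signs => /negbTE ->. Qed.

Lemma PB_sign_sperm_peak_signs n S c : admissible n S -> c = 1 \/ c = -1 ->
  PB n S (sign_sperm (peak_signs S c)).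
Proof.
move=> [S_range S_sep] /(peak_signs_sign S) e_sign.
split; first exact: sign_sperm_signed.
move=> i; case: (boolP (1 < i < n)%N) => i_range; last first.
  by rewrite /is_peak (negbTE i_range); apply/negbTE/negP=> /S_range; apply/negP.
rewrite is_peak_sign_sperm //.
have [i_neq1 Si_neq1] : (i != 1)%N /\ (i.+1 != 1)%N by split; lia.
rewrite /peak_signs (negbTE i_neq1) (negbTE Si_neq1).
by case Si: (S i) => //; rewrite (negbTE (S_sep _ Si)).
Qed.

Theorem theorem4p6 (n : nat) (S : pred nat) :
  (2 <= n)%N ->
  (exists s, PB n S s) ->
  [/\ is_min (fun d => exists s r, [/\ PB n S s, PB n S r, ~ sp_eq n s r
                                      & d = dH n s r]) 1%N,
      is_min (fun d => exists s r, [/\ PB n S s, PB n S r, ~ sp_eq n s r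
                                      & d = dL n s r]) 1%N
    & is_min (fun d => exists s r, [/\ PB n S s, PB n S r, ~ sp_eq n s r
                                      & dW_is n s r d]) 1%N].
Proof.
move=> n_ge2 [s0 [_ /peak_set_admissible S_adm]].
have n_gt0 : (0 < n)%N by lia.
have sign1 : (1 : int) = 1 \/ (1 : int) = -1 by left.
have signN1 : (-1 : int) = 1 \/ (-1 : int) = -1 by right.
have flip1 : peak_signs S (-1) 1%N = - peak_signs S 1 1%N by [].
have flip_eq := @peak_signs_neq1 S (-1) 1.
have PB1 := PB_sign_sperm_peak_signs S_adm sign1.
have PBN1 := PB_sign_sperm_peak_signs S_adm signN1.
have neq1 := sign_sperm_flip1_neq n_gt0 (peak_signs_sign S sign1) flip1.
pose c : int := if S 2%N then -1 else 1.
have c_sign : c = 1 \/ c = -1 by rewrite /c; case: (S 2%N); auto.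
have c_swap : peak_signs S c 2%N = - peak_signs S c 1%N.
  by rewrite /peak_signs /c; case: (S 2%N).
have PBc := PB_sign_sperm_peak_signs S_adm c_sign.
have PB_swap := PB_gen1_sign_sperm (peak_signs_sign S c_sign) n_ge2 c_swap PBc.
split.
- apply: (@min_distance_one n S (fun s r d => d = dH n s r) _ _ _ _ PB1 PBN1 neq1 erefl).
    by move=> s r ss sr /esym/dH_eq0; apply: sp_eq_pos.
  exact: dH_sign_sperm_flip1 flip_eq.
- apply: (@min_distance_one n S (fun s r d => d = dL n s r) _ _ _ _ PBc PB_swap _ erefl).
  + by move=> s r ss sr /esym/dL_eq0; apply: sp_eq_pos.
  + apply: sign_sperm_gen1_neq n_gt0; exact: peak_signs_sign.
  + exact: dL_gen1_comp.
- apply: (@min_distance_one n S (dW_is n) _ _ _ (@dW_is0 n) PB1 PBN1 neq1 _ (leqnn 1%N)).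
  exact: dW_sign_sperm_flip1 n_gt0 (peak_signs_sign S sign1) flip1 flip_eq.
Qed.
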